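(* Let $m>0$, $\gamma>0$, $c_k=k^{-(1+\alpha\beta)}$, $\lambda_k=k^{-\beta}$ ($k\geq1$), with $\alpha>1$, $\beta>\frac1{\alpha-1}$ and $\frac12<s<\frac{(\alpha-1)\beta}2$. Let $\Phi\in C^\infty(\mathbb{R})$ satisfy $\int_{\mathbb{R}}|\Phi'|e^{-\Phi}dx<\infty$ and $b(\Phi(x)+1)\geq x^2$ for some $b>0$ and all $x$. For $N\in\mathbb{N}$ define $\Theta(\cdot;s,N):\mathcal{H}_{-s}\to\mathbb{R}$ by $$\Theta(X;s,N)=\frac1m\Phi(x)+\frac12v^2+\frac1{2m}\sum_{k=1}^Nz_k^2+\frac12\sum_{k>N}k^{-2s}z_k^2.$$ Then there exists $N=N(m,\gamma,\alpha,\beta,s)\in\mathbb{N}$ sufficiently large such that, for some $a>0$, $\Theta(X):=\Theta(X;s,N)$ satisfies $$\sup_{X\in\mathcal{H}_{-s}}\mathcal{L}\Theta(X)\leq a.$$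
   Context: $\mathcal{H}_{-s}$ is the Hilbert space of real sequences $X=(x,v,z_1,z_2,\dots)$ with $\|X\|_{-s}^2=x^2+v^2+\sum_{k\geq1}k^{-2s}z_k^2<\infty$. For smooth $\varphi$, $\mathcal L\varphi(X)=v\partial_x\varphi+\big(-\tfrac\gamma mv-\tfrac1m\Phi'(x)-\tfrac1m\sum_{k\geq1}\sqrt{c_k}z_k\big)\partial_v\varphi+\sum_{k\geq1}(-\lambda_kz_k+\sqrt{c_k}v)\partial_{z_k}\varphi+\tfrac{\gamma}{m^2}\partial_v^2\varphi+\sum_{k\geq1}\lambda_k\partial_{z_k}^2\varphi$, the generator of the system $dx=v\,dt$, $m\,dv=(-\gamma v-\Phi'(x)-\sum_k\sqrt{c_k}z_k)dt+\sqrt{2\gamma}dW_0$, $dz_k=(-\lambda_kz_k+\sqrt{c_k}v)dt+\sqrt{2\lambda_k}dW_k$. *)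

From Stdlib Require Import Reals.
From Coquelicot Require Import Coquelicot.
Open Scope R_scope.

(* Convention: a point X = (x, v, z_1, z_2, ...) of H_{-s} is represented by
   x v : R and z : nat -> R with  z n  standing for  z_{n+1}  (n >= 0),
   i.e. index k = S n.  *)

Definition wgt (s : R) (n : nat) : R := Rpower (INR (S n)) (-(2 * s)).

Definition ck (alpha beta : R) (n : nat) : R := Rpower (INR (S n)) (-(1 + alpha * beta)).
Definition lamk (beta : R) (n : nat) : R := Rpower (INR (S n)) (- beta).

Definition in_Hs (s : R) (z : nat -> R) : Prop :=
  ex_series (fun n => wgt s n * (z n) ^ 2).

Definition upd (z : nat -> R) (n : nat) (t : R) : nat -> R :=
  fun j => if Nat.eqb j n then t else z j.

Definition Theta (m s : R) (N : nat) (Phi : R -> R)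
    (x v : R) (z : nat -> R) : R :=
  Phi x / m + v ^ 2 / 2
  + Series (fun n => if Nat.ltb n N then (z n) ^ 2 / (2 * m)
                     else wgt s n * (z n) ^ 2 / 2).

Definition gen (m gamma alpha beta : R) (Phi : R -> R)
    (phi : R -> R -> (nat -> R) -> R) (x v : R) (z : nat -> R) : R :=
  v * Derive (fun t => phi t v z) x
  + (- (gamma / m) * v - (1 / m) * Derive Phi x
     - (1 / m) * Series (fun n => sqrt (ck alpha beta n) * z n))
    * Derive (fun t => phi x t z) v
  + Series (fun n => (- lamk beta n * z n + sqrt (ck alpha beta n) * v)
                     * Derive (fun t => phi x v (upd z n t)) (z n))
  + gamma / m ^ 2 * Derive_n (fun t => phi x t z) 2 v
  + Series (fun n => lamk beta n * Derive_n (fun t => phi x v (upd z n t)) 2 (z n)).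

From Stdlib Require Import Reals Lra Lia Psatz.
From Coquelicot Require Import Coquelicot.
Open Scope R_scope.

(* Theta is quadratic in v and in each z_k, with weights e_k = 1/m for k <= N
   and e_k = k^{-2s} for k > N, and the Phi'(x) terms of L Theta cancel, so
     L Theta = -(gamma/m) v^2 + gamma/m^2 + sum_k lambda_k e_k
               + sum_k [sqrt(c_k) (e_k - 1/m) v z_k - lambda_k e_k z_k^2].
   Completing the square in z_k bounds the k-th bracket by
   v^2 c_k (e_k - 1/m)^2 / (4 lambda_k e_k), which vanishes for k <= N and is
   O(v^2 k^{-(1 + (alpha-1) beta - 2s)}) for k > N.  Since (alpha-1) beta > 2s
   this is summable, so for N large its tail is below gamma/m and is absorbed
   by the friction term -(gamma/m) v^2.  Beyond smoothness, no hypothesis on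
   Phi is needed. *)

Lemma ex_series_eventually_le (a b : nat -> R) (N : nat) :
  (forall n, (N <= n)%nat -> Rabs (a n) <= b n) -> ex_series b -> ex_series a.
Proof.
  intros Hab Hb. apply (ex_series_incr_n a N).
  apply (@ex_series_le R_AbsRing R_CompleteNormedModule _ (fun k => b (N + k)%nat)).
  - intro k. apply Hab. lia.
  - now apply (ex_series_incr_n b N).
Qed.

Lemma Series_le_ex (a b : nat -> R) :
  (forall n, a n <= b n) -> ex_series a -> ex_series b -> Series a <= Series b.
Proof.
  intros Hab Ha Hb.
  apply (is_lim_seq_le (sum_n a) (sum_n b) (Series a) (Series b)).
  - intro n. now apply sum_n_m_le.
  - now apply Series_correct.
  - now apply Series_correct.
Qed.

Lemma Series_update (a : nat -> R) (n : nat) (t : R) : ex_series a ->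
  Series (fun j => if Nat.eqb j n then t else a j) = Series a - a n + t.
Proof.
  intros Ha. set (b := fun j => if Nat.eqb j n then t else a j).
  assert (Htail : forall k, b (S n + k)%nat = a (S n + k)%nat).
  { intro k. unfold b. destruct (Nat.eqb_spec (S n + k) n); [lia | reflexivity]. }
  assert (Hb : ex_series b).
  { apply (ex_series_incr_n b (S n)).
    apply (ex_series_ext (fun k => a (S n + k)%nat)); [now intro k; rewrite Htail |].
    now apply (ex_series_incr_n a (S n)). }
  rewrite (Series_incr_n b (S n)), (Series_incr_n a (S n)) by (lia || assumption).
  rewrite (Series_ext _ _ Htail). simpl pred.
  assert (Hhead : sum_f_R0 b n = sum_f_R0 a n - a n + t).
  { unfold b. destruct n as [|n]; simpl; [ring |].
    rewrite Nat.eqb_refl, (sum_eq _ a); [ring |].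
    intros i Hi. destruct (Nat.eqb_spec i (S n)); [lia | reflexivity]. }
  lra.
Qed.

Lemma Series_eq_tail (a b : nat -> R) (N : nat) :
  (forall n, (n < N)%nat -> a n = 0) -> (forall n, (N <= n)%nat -> a n = b n) ->
  ex_series b -> Series a = Series (fun k => b (N + k)%nat).
Proof.
  intros Hlt Hge Hb.
  assert (Htail : forall k, a (N + k)%nat = b (N + k)%nat) by (intro k; apply Hge; lia).
  destruct N as [|N]; [now apply Series_ext |].
  assert (Ha : ex_series a).
  { apply (ex_series_incr_n a (S N)), (ex_series_ext (fun k => b (S N + k)%nat));
      [now intro k; rewrite Htail | now apply (ex_series_incr_n b (S N))]. }
  rewrite (Series_incr_n a (S N)) by (lia || assumption). simpl pred.
  rewrite sum_eq_R0 by (intros n Hn; apply Hlt; lia).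
  rewrite (Series_ext _ _ Htail). ring.
Qed.

Lemma Series_tail_lt (a : nat -> R) (eps : R) : ex_series a -> 0 < eps ->
  exists N, Series (fun k => a (N + k)%nat) < eps.
Proof.
  intros Ha Heps.
  destruct (proj1 (is_series_Reals a (Series a)) (Series_correct a Ha) eps Heps) as [M HM].
  specialize (HM M (le_n M)). unfold R_dist in HM. apply Rabs_def2 in HM.
  exists (S M). rewrite (Series_incr_n a (S M)) in HM by (lia || assumption).
  simpl pred in HM. lra.
Qed.

Lemma Rpower_succ_telescope (d k : R) : 0 < d -> 0 < k ->
  d * Rpower (k + 1) (-(1 + d)) <= Rpower k (- d) - Rpower (k + 1) (- d).
Proof.
  intros Hd Hk. unfold Rpower.
  set (A := ln k). set (B := ln (k + 1)).
  assert (HBA : / (k + 1) <= B - A).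
  { assert (Hexp : exp (A - B) = k / (k + 1)).
    { unfold Rminus. rewrite exp_plus, exp_Ropp. unfold A, B. rewrite !exp_ln by lra. field. lra. }
    pose proof (exp_ineq1_le (A - B)) as H. rewrite Hexp in H.
    assert (k / (k + 1) = 1 - / (k + 1)) by (field; lra). lra. }
  assert (HA : exp (- d * A) = exp (- d * B) * exp (d * (B - A))).
  { rewrite <- exp_plus. f_equal. ring. }
  assert (HB : exp (-(1 + d) * B) = exp (- d * B) * / (k + 1)).
  { replace (-(1 + d) * B) with (- d * B + - B) by ring.
    rewrite exp_plus, exp_Ropp. unfold B. rewrite exp_ln by lra. reflexivity. }
  rewrite HA, HB.
  pose proof (exp_ineq1_le (d * (B - A))).
  pose proof (exp_pos (- d * B)).
  assert (d * / (k + 1) <= d * (B - A)) by (apply Rmult_le_compat_l; lra).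
  nra.
Qed.

Lemma ex_series_Rpower_INR (d : R) : 0 < d ->
  ex_series (fun n => Rpower (INR (S n)) (-(1 + d))).
Proof.
  intros Hd. set (r := fun n => Rpower (INR (S n)) (-(1 + d))).
  assert (Hpart : forall M, sum_f_R0 r M <= 1 + (1 - Rpower (INR (S M)) (- d)) / d).
  { induction M as [|M IH].
    - simpl. unfold r, Rpower. simpl. rewrite ln_1, !Rmult_0_r, exp_0. unfold Rdiv. lra.
    - simpl sum_f_R0.
      pose proof (Rpower_succ_telescope d (INR (S M)) Hd (lt_0_INR _ (Nat.lt_0_succ M))) as H.
      rewrite <- S_INR in H. fold (r (S M)) in H.
      apply (Rmult_le_compat_r (/ d)) in H; [| left; apply Rinv_0_lt_compat; lra].
      replace (d * r (S M) * / d) with (r (S M)) in H by (field; lra).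
      unfold Rdiv in *. lra. }
  apply ex_series_Reals_1, growing_cv.
  - intro n. simpl. pose proof (exp_pos (-(1 + d) * ln (INR (S (S n))))). unfold r, Rpower. lra.
  - exists (1 + 1 / d). intros y [M ->]. eapply Rle_trans; [apply Hpart |].
    pose proof (exp_pos (- d * ln (INR (S M)))). unfold Rpower in *.
    pose proof (Rinv_0_lt_compat d Hd). unfold Rdiv. nra.
Qed.

Lemma Rpower_INR_S_pos (n : nat) (y : R) : 0 < Rpower (INR (S n)) y.
Proof. apply exp_pos. Qed.

Lemma Rpower_INR_S_le_1 (n : nat) (y : R) : y <= 0 -> Rpower (INR (S n)) y <= 1.
Proof.
  intros Hy. rewrite <- (Rpower_O (INR (S n))) by (apply lt_0_INR; lia).
  apply Rle_Rpower; [apply (le_INR 1); lia | exact Hy].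
Qed.

Lemma ck_div_lamk_wgt (alpha beta s : R) (n : nat) :
  ck alpha beta n / (lamk beta n * wgt s n)
  = Rpower (INR (S n)) (-(1 + ((alpha - 1) * beta - 2 * s))).
Proof.
  unfold ck, lamk, wgt.
  replace (-(1 + ((alpha - 1) * beta - 2 * s)))
    with (-(1 + alpha * beta) - - beta - - (2 * s)) by ring.
  unfold Rminus. rewrite !Rpower_plus, !(Rpower_Ropp _ (- _)).
  pose proof (Rpower_INR_S_pos n (- beta)). pose proof (Rpower_INR_S_pos n (- (2 * s))).
  field. lra.
Qed.

Lemma Derive_half_sq (K e y : R) : Derive (fun t => K + e * t ^ 2 / 2) y = e * y.
Proof. apply is_derive_unique. auto_derive; [exact I | field]. Qed.

Lemma Derive_n_half_sq (K e y : R) : Derive_n (fun t => K + e * t ^ 2 / 2) 2 y = e.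
Proof.
  simpl. rewrite (Derive_ext _ (fun t => e * t)) by apply Derive_half_sq.
  apply is_derive_unique. auto_derive; [exact I | ring].
Qed.

Definition theta_coef (N : nat) (m s : R) (n : nat) : R :=
  if Nat.ltb n N then 1 / m else wgt s n.

Section Lyapunov.

Variables (m gamma alpha beta s : R) (N : nat).
Hypotheses (hm : 0 < m) (hs : 0 < s).

Lemma theta_coef_pos (n : nat) : 0 < theta_coef N m s n.
Proof.
  unfold theta_coef. destruct (Nat.ltb n N);
    [apply Rdiv_lt_0_compat; lra | apply Rpower_INR_S_pos].
Qed.

Lemma theta_coef_le (n : nat) : theta_coef N m s n <= 1 / m + 1.
Proof.
  assert (0 < 1 / m) by (apply Rdiv_lt_0_compat; lra).
  unfold theta_coef. destruct (Nat.ltb n N); [lra |].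
  pose proof (Rpower_INR_S_le_1 n (- (2 * s)) ltac:(lra)). unfold wgt. lra.
Qed.

Lemma Theta_eq (Phi : R -> R) (x v : R) (z : nat -> R) :
  Theta m s N Phi x v z
  = Phi x / m + v ^ 2 / 2 + Series (fun n => theta_coef N m s n * z n ^ 2 / 2).
Proof.
  unfold Theta. f_equal. apply Series_ext. intro n.
  unfold theta_coef. destruct (Nat.ltb n N); field; lra.
Qed.

Lemma ex_series_theta (z : nat -> R) : in_Hs s z ->
  ex_series (fun n => theta_coef N m s n * z n ^ 2 / 2).
Proof.
  intros Hz. apply (ex_series_eventually_le _ (fun n => wgt s n * z n ^ 2 / 2) N).
  - intros n Hn. unfold theta_coef. destruct (Nat.ltb_spec n N); [lia |].
    apply Req_le, Rabs_pos_eq.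
    pose proof (Rpower_INR_S_pos n (- (2 * s))). pose proof (pow2_ge_0 (z n)).
    unfold wgt. apply Rmult_le_pos; [nra | lra].
  - now apply ex_series_scal_r.
Qed.

Lemma Theta_update (Phi : R -> R) (x v : R) (z : nat -> R) (n : nat) (t : R) :
  in_Hs s z ->
  Theta m s N Phi x v (upd z n t)
  = (Theta m s N Phi x v z - theta_coef N m s n * z n ^ 2 / 2)
    + theta_coef N m s n * t ^ 2 / 2.
Proof.
  intros Hz. rewrite !Theta_eq.
  rewrite (Series_ext _ (fun j => if Nat.eqb j n then theta_coef N m s n * t ^ 2 / 2
                                  else theta_coef N m s j * z j ^ 2 / 2)).
  - rewrite Series_update by now apply ex_series_theta. ring.
  - intro j. unfold upd. destruct (Nat.eqb_spec j n); [subst j |]; reflexivity.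
Qed.

Lemma gen_Theta (Phi : R -> R) (x v : R) (z : nat -> R) :
  ex_derive Phi x -> in_Hs s z ->
  gen m gamma alpha beta Phi (Theta m s N Phi) x v z
  = - (gamma / m) * v ^ 2 + gamma / m ^ 2
    - v / m * Series (fun n => sqrt (ck alpha beta n) * z n)
    + Series (fun n => (- lamk beta n * z n + sqrt (ck alpha beta n) * v)
                       * (theta_coef N m s n * z n))
    + Series (fun n => lamk beta n * theta_coef N m s n).
Proof.
  intros HPhi Hz. unfold gen.
  assert (Hx : Derive (fun t => Theta m s N Phi t v z) x = Derive Phi x / m).
  { apply is_derive_unique. unfold Theta. auto_derive; [exact HPhi | now rewrite Rmult_1_l]. }
  assert (Hv : forall t, Theta m s N Phi x t z
                 = Phi x / m + Series (fun n => theta_coef N m s n * z n ^ 2 / 2) + 1 * t ^ 2 / 2).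
  { intro t. rewrite Theta_eq. lra. }
  rewrite Hx, (Derive_ext _ _ _ Hv), (Derive_n_ext _ _ _ _ Hv),
    Derive_half_sq, Derive_n_half_sq.
  rewrite (Series_ext (fun n => _ * Derive _ _)
             (fun n => (- lamk beta n * z n + sqrt (ck alpha beta n) * v)
                       * (theta_coef N m s n * z n))).
  2: { intro n. f_equal. rewrite (Derive_ext _ _ _ (fun t => Theta_update Phi x v z n t Hz)).
       apply Derive_half_sq. }
  rewrite (Series_ext (fun n => lamk beta n * Derive_n _ 2 _)
             (fun n => lamk beta n * theta_coef N m s n)).
  2: { intro n. f_equal. rewrite (Derive_n_ext _ _ _ _ (fun t => Theta_update Phi x v z n t Hz)).
       apply Derive_n_half_sq. }
  field. lra.
Qed.

End Lyapunov.

Lemma completing_square (a k y : R) : 0 < k -> a * y - k * y ^ 2 <= a ^ 2 / (4 * k).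
Proof.
  intros Hk.
  assert (a ^ 2 / (4 * k) - (a * y - k * y ^ 2) = (a - 2 * k * y) ^ 2 / (4 * k))
    by (field; lra).
  assert (0 <= (a - 2 * k * y) ^ 2 / (4 * k))
    by (apply Rdiv_le_0_compat; [apply pow2_ge_0 | lra]).
  lra.
Qed.

Lemma Rabs_mul_le_half (p q w : R) : 0 < w -> Rabs (p * q) <= (p ^ 2 / w + w * q ^ 2) / 2.
Proof.
  intros Hw. rewrite Rabs_mult.
  pose proof (completing_square (Rabs p) (w / 2) (Rabs q) ltac:(lra)) as H.
  rewrite !pow2_abs in H.
  replace (p ^ 2 / (4 * (w / 2))) with (p ^ 2 / w / 2) in H by (field; lra).
  lra.
Qed.

(* The coefficient of v^2 left by completing the square in z_k, see [cross_term_le]. *)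
Definition excess_coef (N : nat) (m alpha beta s : R) (n : nat) : R :=
  ck alpha beta n * (theta_coef N m s n - 1 / m) ^ 2
  / (4 * (lamk beta n * theta_coef N m s n)).

Section Estimate.

Variables (m alpha beta s : R) (N : nat).
Hypotheses (hm : 0 < m) (hs : 0 < s) (hbeta : 0 < beta)
  (hd : 0 < (alpha - 1) * beta - 2 * s).

Let r (n : nat) : R := Rpower (INR (S n)) (-(1 + ((alpha - 1) * beta - 2 * s))).

Lemma Rabs_sqrt_ck_mul_le (n : nat) (y : R) :
  Rabs (sqrt (ck alpha beta n) * y) <= (r n + wgt s n * y ^ 2) / 2.
Proof.
  pose proof (Rpower_INR_S_pos n (-(1 + alpha * beta))) as Hc.
  pose proof (Rpower_INR_S_pos n (- (2 * s))) as Hw.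
  pose proof (Rpower_INR_S_pos n (- beta)) as Hl.
  pose proof (Rpower_INR_S_le_1 n (- beta) ltac:(lra)) as Hl1.
  fold (ck alpha beta n) (wgt s n) (lamk beta n) in *.
  eapply Rle_trans; [apply (Rabs_mul_le_half _ _ (wgt s n) Hw) |].
  rewrite pow2_sqrt by lra.
  assert (ck alpha beta n / wgt s n <= r n).
  { unfold r. rewrite <- ck_div_lamk_wgt.
    apply Rmult_le_reg_r with (lamk beta n); [exact Hl |].
    replace (ck alpha beta n / (lamk beta n * wgt s n) * lamk beta n)
      with (ck alpha beta n / wgt s n) by (field; lra).
    assert (0 <= ck alpha beta n / wgt s n) by (apply Rdiv_le_0_compat; lra).
    nra. }
  lra.
Qed.

Lemma ex_series_mul_sqrt_ck (b : nat -> R) (B : R) (z : nat -> R) :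
  (forall n, Rabs (b n) <= B) -> in_Hs s z ->
  ex_series (fun n => b n * (sqrt (ck alpha beta n) * z n)).
Proof.
  intros Hb Hz.
  apply (ex_series_eventually_le _ (fun n => B * ((r n + wgt s n * z n ^ 2) / 2)) 0).
  - intros n _. rewrite Rabs_mult.
    apply Rmult_le_compat; [apply Rabs_pos | apply Rabs_pos | apply Hb |].
    apply Rabs_sqrt_ck_mul_le.
  - apply (@ex_series_scal R_AbsRing R_NormedModule B), ex_series_scal_r.
    apply (@ex_series_plus R_AbsRing R_NormedModule r).
    + now apply ex_series_Rpower_INR.
    + exact Hz.
Qed.

Lemma excess_coef_nonneg (M : nat) (n : nat) : 0 <= excess_coef M m alpha beta s n.
Proof.
  pose proof (theta_coef_pos m s M hm n). pose proof (Rpower_INR_S_pos n (- beta)).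
  apply Rdiv_le_0_compat.
  - apply Rmult_le_pos; [left; apply Rpower_INR_S_pos | apply pow2_ge_0].
  - unfold lamk in *. nra.
Qed.

Lemma ex_series_excess_coef (M : nat) : ex_series (excess_coef M m alpha beta s).
Proof.
  assert (Hm1 : 0 < 1 / m) by (apply Rdiv_lt_0_compat; lra).
  apply (ex_series_eventually_le _ (fun n => (1 / m + 1) ^ 2 / 4 * r n) M).
  - intros n Hn. rewrite Rabs_pos_eq by apply excess_coef_nonneg.
    unfold excess_coef, theta_coef. destruct (Nat.ltb_spec n M); [lia |].
    pose proof (Rpower_INR_S_pos n (- (2 * s))) as Hw.
    pose proof (Rpower_INR_S_pos n (- beta)).
    pose proof (Rpower_INR_S_le_1 n (- (2 * s)) ltac:(lra)) as Hw1.
    fold (wgt s n) (lamk beta n) in *.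
    unfold r. rewrite <- ck_div_lamk_wgt.
    replace (ck alpha beta n * (wgt s n - 1 / m) ^ 2 / (4 * (lamk beta n * wgt s n)))
      with ((wgt s n - 1 / m) ^ 2 / 4 * (ck alpha beta n / (lamk beta n * wgt s n)))
      by (field; lra).
    apply Rmult_le_compat_r.
    + apply Rdiv_le_0_compat; [left; apply Rpower_INR_S_pos | nra].
    + apply Rmult_le_compat_r; nra.
  - apply (@ex_series_scal R_AbsRing R_NormedModule). now apply ex_series_Rpower_INR.
Qed.

Lemma Series_excess_coef :
  Series (excess_coef N m alpha beta s)
  = Series (fun k => excess_coef 0 m alpha beta s (N + k)).
Proof.
  apply Series_eq_tail; [| | apply ex_series_excess_coef].
  - intros n Hn. unfold excess_coef, theta_coef.
    destruct (Nat.ltb_spec n N); [| lia]. unfold Rminus. rewrite Rplus_opp_r. field.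
    pose proof (Rpower_INR_S_pos n (- beta)). fold (lamk beta n) in *. split; lra.
  - intros n Hn. unfold excess_coef, theta_coef.
    destruct (Nat.ltb_spec n N); [lia | reflexivity].
Qed.

Lemma cross_term_le (n : nat) (v y : R) :
  - (v / m) * (sqrt (ck alpha beta n) * y)
  + (- lamk beta n * y + sqrt (ck alpha beta n) * v) * (theta_coef N m s n * y)
  <= v ^ 2 * excess_coef N m alpha beta s n.
Proof.
  set (e := theta_coef N m s n). set (c := ck alpha beta n). set (l := lamk beta n).
  assert (He : 0 < e) by apply (theta_coef_pos m s N hm).
  assert (Hl : 0 < l) by apply Rpower_INR_S_pos.
  assert (Hc : 0 <= c) by (left; apply Rpower_INR_S_pos).
  pose proof (completing_square (sqrt c * (e - 1 / m) * v) (l * e) y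
                ltac:(apply Rmult_lt_0_compat; lra)) as H.
  replace ((sqrt c * (e - 1 / m) * v) ^ 2) with (v ^ 2 * (sqrt c ^ 2 * (e - 1 / m) ^ 2))
    in H by ring.
  rewrite pow2_sqrt in H by exact Hc.
  unfold excess_coef. fold e c l.
  replace (v ^ 2 * (c * (e - 1 / m) ^ 2 / (4 * (l * e))))
    with (v ^ 2 * (c * (e - 1 / m) ^ 2) / (4 * (l * e))) by (field; lra).
  replace (- (v / m) * (sqrt c * y) + (- l * y + sqrt c * v) * (e * y))
    with (sqrt c * (e - 1 / m) * v * y - l * e * y ^ 2) by (field; lra).
  exact H.
Qed.

Lemma ex_series_z_drift (v : R) (z : nat -> R) : in_Hs s z ->
  ex_series (fun n => (- lamk beta n * z n + sqrt (ck alpha beta n) * v)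
                      * (theta_coef N m s n * z n)).
Proof.
  intros Hz.
  apply (@ex_series_ext R_AbsRing R_NormedModule
           (fun n => - (2 * lamk beta n) * (theta_coef N m s n * z n ^ 2 / 2)
                     + v * theta_coef N m s n * (sqrt (ck alpha beta n) * z n))).
  { (* [field] does not see through Coquelicot's normed-module carrier *)
    intro n. change (?a = ?b) with (@eq R a b). field. }
  apply (@ex_series_plus R_AbsRing R_NormedModule).
  - apply (ex_series_eventually_le _ (fun n => 2 * (theta_coef N m s n * z n ^ 2 / 2)) 0).
    + intros n _.
      pose proof (theta_coef_pos m s N hm n). pose proof (pow2_ge_0 (z n)).
      pose proof (Rpower_INR_S_pos n (- beta)).
      pose proof (Rpower_INR_S_le_1 n (- beta) ltac:(lra)).
      fold (lamk beta n) in *.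
      rewrite Rabs_mult, Rabs_Ropp, !Rabs_pos_eq by (apply Rmult_le_pos; nra || lra).
      apply Rmult_le_compat_r; [apply Rmult_le_pos; nra | lra].
    + now apply (@ex_series_scal R_AbsRing R_NormedModule), ex_series_theta.
  - apply (ex_series_mul_sqrt_ck _ (Rabs v * (1 / m + 1))); [| exact Hz].
    intro n. rewrite Rabs_mult.
    pose proof (theta_coef_pos m s N hm n). pose proof (theta_coef_le m s N hm hs n).
    assert (0 < 1 / m) by (apply Rdiv_lt_0_compat; lra).
    apply Rmult_le_compat_l; [apply Rabs_pos |].
    rewrite Rabs_pos_eq; lra.
Qed.

Lemma drift_z_le (v : R) (z : nat -> R) : in_Hs s z ->
  - (v / m) * Series (fun n => sqrt (ck alpha beta n) * z n)
  + Series (fun n => (- lamk beta n * z n + sqrt (ck alpha beta n) * v)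
                     * (theta_coef N m s n * z n))
  <= v ^ 2 * Series (excess_coef N m alpha beta s).
Proof.
  intros Hz.
  assert (HA : ex_series (fun n => - (v / m) * (sqrt (ck alpha beta n) * z n))).
  { apply (ex_series_mul_sqrt_ck _ (Rabs (v / m))); [| exact Hz].
    intro n. rewrite Rabs_Ropp. apply Rle_refl. }
  pose proof (ex_series_z_drift v z Hz) as HY.
  rewrite <- Series_scal_l, <- Series_plus by assumption.
  rewrite <- Series_scal_l.
  apply Series_le_ex.
  - intro n. apply cross_term_le.
  - now apply (@ex_series_plus R_AbsRing R_NormedModule).
  - apply (@ex_series_scal R_AbsRing R_NormedModule), ex_series_excess_coef.
Qed.

End Estimate.

Theorem proposition5p3 (m gamma alpha beta s : R)
  (hm : 0 < m) (hg : 0 < gamma) (ha : 1 < alpha) (hb : 1 / (alpha - 1) < beta)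
  (hs1 : 1 / 2 < s) (hs2 : s < (alpha - 1) * beta / 2) :
  exists N : nat,
  forall Phi : R -> R,
    (forall (n : nat) (x : R), ex_derive_n Phi n x) ->
    ex_RInt_gen (fun x => Rabs (Derive Phi x) * exp (- Phi x))
      (Rbar_locally m_infty) (Rbar_locally p_infty) ->
    (exists b : R, 0 < b /\ forall x : R, b * (Phi x + 1) >= x ^ 2) ->
    exists a : R, 0 < a /\
      forall (x v : R) (z : nat -> R), in_Hs s z ->
        gen m gamma alpha beta Phi (Theta m s N Phi) x v z <= a.
Proof.
  assert (hs : 0 < s) by lra.
  assert (hbeta : 0 < beta).
  { assert (0 < 1 / (alpha - 1)) by (apply Rdiv_lt_0_compat; lra). lra. }
  assert (hd : 0 < (alpha - 1) * beta - 2 * s) by lra.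
  assert (hgm : 0 < gamma / m) by (apply Rdiv_lt_0_compat; lra).
  destruct (Series_tail_lt _ _ (ex_series_excess_coef m alpha beta s hm hs hd 0) hgm)
    as [N HN].
  exists N. intros Phi HPhi _ _.
  set (Slam := Series (fun n => lamk beta n * theta_coef N m s n)).
  exists (gamma / m ^ 2 + Rabs Slam + 1). split.
  { assert (0 < gamma / m ^ 2) by (apply Rdiv_lt_0_compat; nra).
    pose proof (Rabs_pos Slam). lra. }
  intros x v z Hz.
  rewrite (gen_Theta m gamma alpha beta s N hm) by (exact (HPhi 1%nat x) || exact Hz).
  pose proof (drift_z_le m alpha beta s N hm hs hbeta hd v z Hz) as Hdrift.
  rewrite (Series_excess_coef m alpha beta s N hm hs hd) in Hdrift.
  assert (v ^ 2 * Series (fun k => excess_coef 0 m alpha beta s (N + k))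
          <= v ^ 2 * (gamma / m)) by (apply Rmult_le_compat_l; [apply pow2_ge_0 | lra]).
  pose proof (Rle_abs Slam).
  fold Slam. lra.
Qed.
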